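(* Let $G_r=(V_r,E_r)$ be an arbitrary directed graph and $(i,j)\in E_r$ an existing edge. Adding to $G_r$ any number of new edges parallel to it, each oriented either as $(i,j)$ or as $(j,i)$, increases the extraction width $\mathrm{ew}(G_r)$ by at most the maximum degree of $G_r$. The same holds if instead of edges, paths between $i$ and $j$ (through new nodes) are added.
   Context: An extraction order of a directed (multi)graph $G=(V,E)$ is a rooted directed acyclic graph $G^{\mathcal X}=(V,E^{\mathcal X},s)$ in which every node is reachable from $s$ and $E^{\mathcal X}$ is obtained from $E$ by reversing some (possibly no) edges. A confluence from $a$ to $b$ is a pair of directed paths in $E^{\mathcal X}$ from $a$ to $b$ sharing no node other than $a,b$. For $e\in E^{\mathcal X}$, its label set $\mathcal L_e$ is the set of nodes $b$ such that $e$ lies on a confluence with target $b$. Each node's outgoing edges are partitioned into bags: classes of the equivalence relation generated by $e\sim e'$ iff $\mathcal L_e\cap\mathcal L_{e'}\ne\emptyset$; bag label set $\mathcal L_B=\bigcup_{e\in B}\mathcal L_e$. The width of $G^{\mathcal X}$ is $\mathrm{ew}_{\mathcal X}(G^{\mathcal X})=1+\max|\mathcal L_B|$ over all bags, and $\mathrm{ew}(G)$ is the minimum width over all extraction orders of $G$. *)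

From mathcomp Require Import all_boot.
From mathcomp Require Import boolp.
Set Implicit Arguments. Unset Strict Implicit. Unset Printing Implicit Defensive.

(* A directed multigraph is a finite node type [V] together with a sequence
   [E : seq (V * V)] of directed edges; the k-th edge is [nth _ E k], so
   parallel edges are distinct entries of the sequence. *)

Section ExtractionWidth.
Variable V : finType.
Implicit Types (E EX : seq (V * V)).

Definition swap_edge (e : V * V) : V * V := (e.2, e.1).

Definition flips E EX : bool :=
  all2 (fun e f => (f == e) || (f == swap_edge e)) E EX.

Fixpoint dpath EX (a b : V) (ks : seq nat) : bool :=
  match ks with
  | [::] => a == b
  | k :: ks' => [&& k < size EX, (nth (a, a) EX k).1 == a &
                   dpath EX (nth (a, a) EX k).2 b ks']
  end.

Fixpoint path_nodes EX (a : V) (ks : seq nat) : seq V :=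
  match ks with
  | [::] => [:: a]
  | k :: ks' => a :: path_nodes EX (nth (a, a) EX k).2 ks'
  end.

Definition acyclic EX : Prop :=
  forall (a : V) (ks : seq nat), dpath EX a a ks -> ks = [::].

Definition rooted EX (s : V) : Prop :=
  forall v : V, exists ks, dpath EX s v ks.

Definition extraction_order E EX (s : V) : Prop :=
  [/\ flips E EX, acyclic EX & rooted EX s].

Definition confluence EX (a b : V) (p1 p2 : seq nat) : Prop :=
  [/\ dpath EX a b p1, dpath EX a b p2, p1 != p2 &
      forall v, v \in path_nodes EX a p1 -> v \in path_nodes EX a p2 ->
                v = a \/ v = b].

Definition label_set EX (k : 'I_(size EX)) : {set V} :=
  [set b | `[< exists a p1 p2, confluence EX a b p1 p2 /\
                 ((val k \in p1) \/ (val k \in p2)) >]].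

Definition src EX (k : 'I_(size EX)) : V := (tnth (in_tuple EX) k).1.

(* Two outgoing edges of the same node are related when their label sets
   intersect; bags are the classes of the generated equivalence relation
   (on the outgoing edges of a node). *)
Definition bag_rel EX : rel 'I_(size EX) :=
  fun k k' => (src k == src k') && (label_set k :&: label_set k' != set0).

Definition bag EX (k : 'I_(size EX)) : {set 'I_(size EX)} :=
  [set k' | connect (@bag_rel EX) k k'].

Definition bag_label_set EX (k : 'I_(size EX)) : {set V} :=
  \bigcup_(k' in bag k) label_set k'.

Definition ewX EX : nat := 1 + \max_(k < size EX) #|bag_label_set k|.

(* ew(G) <= w, where ew(G) is the minimum width over all extraction orders *)
Definition ew_le E (w : nat) : Prop :=
  exists EX s, extraction_order E EX s /\ ewX EX <= w.

Definition degree E (v : V) : nat :=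
  count (fun e : V * V => (e.1 == v) || (e.2 == v)) E.

Definition max_degree E : nat := \max_(v : V) degree E v.

End ExtractionWidth.

(* Undirected path i - w_1 - ... - w_n - j through new nodes w_1..w_n,
   as the list of its edges in the orientation i -> w_1 -> ... -> j. *)
Definition path_edges (V W : finType) (i j : V) (ws : seq W)
  : seq ((V + W) * (V + W)) :=
  let ns := inl i :: rcons [seq inr w | w <- ws] (inl j) in
  zip ns (behead ns).

Definition lift_edges (V W : finType) (E : seq (V * V))
  : seq ((V + W) * (V + W)) :=
  [seq (inl e.1, inl e.2) | e <- E].

(* Take an extraction order X of G_r of width at most w in which the edge (i,j)
   appears as (i0,j0), keep it on the old edges, and orient every new edge and
   every new path from i0 to j0. Contracting each new path onto the edge (i0,j0)
   maps directed paths to directed paths of X, so the new order is still acyclic,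
   and it is rooted at the same root. A confluence of the new order ends at an
   old node; its two projected paths either form a confluence of X with the same
   target, or coincide, in which case the confluence is a detour along new paths
   and its target is j0. Hence every label set, and every bag label set, grows
   by at most the node j0, and the width grows by at most 1, which is at most the
   maximum degree since (i,j) is an edge. *)

From mathcomp Require Import all_boot.
From mathcomp Require Import boolp.
Set Implicit Arguments. Unset Strict Implicit. Unset Printing Implicit Defensive.

Section DirectedPaths.
Variables (V : finType) (EX : seq (V * V)).

Fixpoint path_end (a : V) (ks : seq nat) : V :=
  if ks is k :: ks' then path_end (nth (a, a) EX k).2 ks' else a.

Lemma dpath_end a b ks : dpath EX a b ks -> path_end a ks = b.
Proof.
elim: ks a => [|k ks IH] a /=; first by move/eqP.
by case/and3P=> _ _ /IH.
Qed.

Lemma dpath_cat a b p q :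
  dpath EX a b (p ++ q) = dpath EX a (path_end a p) p && dpath EX (path_end a p) b q.
Proof.
elim: p a => [|k p IH] a /=; first by rewrite eqxx.
by rewrite IH !andbA.
Qed.

Lemma dpath_rcons a b p k : k < size EX -> dpath EX a (nth (a, a) EX k).1 p ->
  (nth (a, a) EX k).2 = b -> dpath EX a b (rcons p k).
Proof.
move=> Hk Hp Hb; rewrite -cats1 dpath_cat (dpath_end Hp) Hp /= Hk.
by rewrite !(set_nth_default (a, a) _ Hk) eqxx Hb eqxx.
Qed.

Lemma dpath_split a b p k : dpath EX a b p -> k \in p ->
  exists p1 p2, [/\ p = p1 ++ k :: p2, k < size EX,
    dpath EX a (nth (a, a) EX k).1 p1 & dpath EX (nth (a, a) EX k).2 b p2].
Proof.
move=> H Hk; case/splitPr: Hk H => p1 p2; exists p1, p2.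
move: H; rewrite dpath_cat /= => /and4P [H1 Hk /eqP Hs H2].
rewrite (set_nth_default (a, a) _ Hk) in Hs H2.
by split=> //; rewrite Hs.
Qed.

Lemma path_nodes_behead a p : path_nodes EX a p = a :: behead (path_nodes EX a p).
Proof. by case: p. Qed.

Lemma mem_path_end a p : path_end a p \in path_nodes EX a p.
Proof. by elim: p a => [|k p IH] a /=; rewrite inE ?IH ?orbT. Qed.

Lemma mem_path_nodes_cat v a p q :
  (v \in path_nodes EX a (p ++ q)) =
  (v \in path_nodes EX a p) || (v \in path_nodes EX (path_end a p) q).
Proof.
elim: p a => [|k p IH] a /=; last by rewrite !inE IH orbA.
rewrite inE; case: (v =P a) => [->|] //=.
by rewrite path_nodes_behead inE eqxx.
Qed.

Lemma dpath_edge_nodes a b p k : dpath EX a b p -> k \in p ->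
  ((nth (a, a) EX k).1 \in path_nodes EX a p) /\
  ((nth (a, a) EX k).2 \in path_nodes EX a p).
Proof.
move=> H Hk; have [p1 [p2 [-> Hks H1 H2]]] := dpath_split H Hk.
rewrite !mem_path_nodes_cat (dpath_end H1) /= !inE eqxx /= orbT; split=> //.
apply/orP; right; apply/orP; right.
by rewrite path_nodes_behead inE (set_nth_default (a, a) _ Hks) eqxx.
Qed.

Lemma confluence_sym a b p1 p2 : confluence EX a b p1 p2 -> confluence EX a b p2 p1.
Proof.
case=> H1 H2 Hne Hd; split=> //; first by rewrite eq_sym.
by move=> v h2 h1; apply: Hd.
Qed.

Lemma label_setP (k : 'I_(size EX)) b : b \in label_set k <->
  exists a p1 p2, confluence EX a b p1 p2 /\ val k \in p1.
Proof.
rewrite inE; split => [/asboolP [a [p1 [p2 [Hc [H|H]]]]]|[a [p1 [p2 [Hc H]]]]].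
- by exists a, p1, p2.
- by exists a, p2, p1; split=> //; apply: confluence_sym.
- by apply/asboolP; exists a, p1, p2; split=> //; left.
Qed.

Lemma src_nth (k : 'I_(size EX)) d : src k = (nth d EX k).1.
Proof. by rewrite /src (tnth_nth d). Qed.

Lemma bag_rel_common_label (k1 k2 : 'I_(size EX)) b :
  src k1 = src k2 -> b \in label_set k1 -> b \in label_set k2 -> bag_rel k1 k2.
Proof.
move=> Hs H1 H2; rewrite /bag_rel Hs eqxx /=.
by apply/set0Pn; exists b; rewrite inE H1 H2.
Qed.

End DirectedPaths.

Lemma homo_connect (T T' : finType) (e : rel T) (e' : rel T') (f : T -> T') :
  (forall x y, e x y -> connect e' (f x) (f y)) ->
  forall x y, connect e x y -> connect e' (f x) (f y).
Proof.
move=> H x y /connectP [p Hp ->]; elim: p x Hp => [|z p IH] x /=.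
  by rewrite connect0.
by case/andP => /H Hxz /IH; apply: connect_trans Hxz.
Qed.

Lemma count_le1_nth_inj (T : eqType) (s : seq T) x d d' k k' :
  count_mem x s <= 1 -> k < size s -> k' < size s ->
  nth d s k = x -> nth d' s k' = x -> k = k'.
Proof.
elim: s k k' => [|y s IH] [|k] [|k'] //= Hc Hk Hk' E E'.
- move: Hc; rewrite E eqxx add1n ltnS leqn0 => /eqP /count_memPn.
  by rewrite -E' mem_nth.
- move: Hc; rewrite E' eqxx add1n ltnS leqn0 => /eqP /count_memPn.
  by rewrite -E mem_nth.
- congr S; apply: (IH _ _ _ Hk Hk' E E').
  by apply: leq_trans Hc; apply: leq_addl.
Qed.

Section Flips.
Variable V : finType.
Implicit Types (E X : seq (V * V)).

Lemma flips_size E X : flips E X -> size E = size X.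
Proof. by elim: E X => [|e E IH] [|f X] //= /andP [_ /IH ->]. Qed.

Lemma flips_nth E X k d : flips E X -> k < size E ->
  (nth d X k == nth d E k) || (nth d X k == swap_edge (nth d E k)).
Proof.
elim: E X k => [|e E IH] [|f X] k //= /andP [H1 H2].
by case: k => [|k] //= Hk; apply: IH.
Qed.

Lemma flips_cat E1 X1 E2 X2 :
  flips E1 X1 -> flips E2 X2 -> flips (E1 ++ E2) (X1 ++ X2).
Proof.
elim: E1 X1 => [|e E IH] [|f X] //= /andP [H1 H2] H3.
by rewrite H1 IH.
Qed.

Lemma flips_sym E X : flips E X -> flips X E.
Proof.
elim: E X => [|e E IH] [|f X] //= /andP [H /IH ->]; rewrite andbT.
by case: e H => x y /orP [] /eqP -> /=; rewrite eqxx ?orbT.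
Qed.

Lemma flips_swap E X : flips E X -> flips E (map (@swap_edge _) X).
Proof.
elim: E X => [|e E IH] [|f X] //= /andP [H /IH ->]; rewrite andbT.
by case: e H => x y /orP [] /eqP -> /=; rewrite eqxx ?orbT.
Qed.

Lemma flips_mem E X i j : (i, j) \in E -> flips E X ->
  exists k0 i0 j0, [/\ k0 < size X, nth (i0, i0) X k0 = (i0, j0) &
    (i0, j0) = (i, j) \/ (i0, j0) = (j, i)].
Proof.
move=> H Hf; set k0 := index (i, j) E.
have Hk : k0 < size E by rewrite index_mem.
have HkX : k0 < size X by rewrite -(flips_size Hf).
exists k0, (nth (i, i) X k0).1, (nth (i, i) X k0).2; split=> //.
  by rewrite (set_nth_default (i, i) _ HkX); case: (nth _ _ _).
have := flips_nth (i, i) Hf Hk; rewrite nth_index //.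
by case: (nth _ _ _) => a b /orP [/eqP ->|/eqP ->]; [left|right].
Qed.

Lemma max_degree_gt0 E i j : (i, j) \in E -> 0 < max_degree E.
Proof.
move=> H; apply: leq_trans (@leq_bigmax V (degree E) i).
by rewrite /degree -has_count; apply/hasP; exists (i, j); rewrite //= eqxx.
Qed.

End Flips.

Definition map_edges (V V' : Type) (f : V -> V') (s : seq (V * V)) : seq (V' * V') :=
  [seq (f e.1, f e.2) | e <- s].

(* Old nodes embed via [phi]; [psi] is its partial inverse, so [psi x = None]
   exactly for the new nodes. [rank] increases along new edges between new
   nodes, which rules out cycles among them. *)
Section Extension.
Variables (V V' : finType) (phi : V -> V') (psi : V' -> option V).
Hypothesis phiK : pcancel phi psi.
Hypothesis psiK : forall x v, psi x = Some v -> phi v = x.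
Variables (EX : seq (V * V)) (G : seq (V' * V')) (k0 : nat) (i0 j0 : V).
Variable rank : V' -> nat.
Hypothesis k0_lt : k0 < size EX.
Hypothesis nth_k0 : nth (i0, i0) EX k0 = (i0, j0).
Hypothesis EX_acyclic : acyclic EX.

Definition ext_order := map_edges phi EX ++ G.

Hypothesis new_edge_ends : forall g, g \in G ->
  (g.1 = phi i0 \/ psi g.1 = None) /\ (g.2 = phi j0 \/ psi g.2 = None).
Hypothesis rank_new_edge : forall g, g \in G ->
  psi g.1 = None -> psi g.2 = None -> rank g.1 < rank g.2.
Hypothesis fresh_indegree_le1 : forall x, psi x = None ->
  count_mem x (map snd ext_order) <= 1.
Hypothesis fresh_outdegree_le1 : forall x, psi x = None ->
  count_mem x (map fst ext_order) <= 1.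
Hypothesis fresh_reached : forall x, psi x = None -> x \in map snd G.

Let phi_inj : injective phi := pcan_inj phiK.

Lemma size_ext_order : size ext_order = size EX + size G.
Proof. by rewrite size_cat size_map. Qed.

Lemma ltn_size_ext_order k : k < size EX -> k < size ext_order.
Proof. by rewrite size_ext_order => /leq_trans; apply; rewrite leq_addr. Qed.

Lemma nth_ext_order_old k d : k < size EX ->
  nth d ext_order k = (phi (nth (i0, i0) EX k).1, phi (nth (i0, i0) EX k).2).
Proof.
move=> Hk; rewrite nth_cat size_map Hk.
by rewrite (set_nth_default (phi i0, phi i0)) ?size_map // (nth_map (i0, i0)).
Qed.

Lemma nth_ext_order_new k d : size EX <= k -> k < size ext_order ->
  nth d ext_order k \in G.
Proof.
move=> H1 H2; rewrite nth_cat size_map ltnNge H1 /=.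
by apply: mem_nth; rewrite ltn_subLR // -size_ext_order.
Qed.

Lemma fresh_tgt_inj k k' d d' : k < size ext_order -> k' < size ext_order ->
  psi (nth d ext_order k).2 = None ->
  (nth d ext_order k).2 = (nth d' ext_order k').2 -> k = k'.
Proof.
move=> Hk Hk' /fresh_indegree_le1 Hx Ekk'.
by apply: (count_le1_nth_inj (d := d.2) (d' := d'.2) Hx);
  rewrite ?size_map ?(nth_map d) // (set_nth_default d' d Hk') -Ekk'.
Qed.

Lemma fresh_src_inj k k' d d' : k < size ext_order -> k' < size ext_order ->
  psi (nth d ext_order k).1 = None ->
  (nth d ext_order k).1 = (nth d' ext_order k').1 -> k = k'.
Proof.
move=> Hk Hk' /fresh_outdegree_le1 Hx Ekk'.
by apply: (count_le1_nth_inj (d := d.1) (d' := d'.1) Hx);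
  rewrite ?size_map ?(nth_map d) // (set_nth_default d' d Hk') -Ekk'.
Qed.

(* New nodes sit on paths leaving i0, so they are projected onto i0. *)
Definition base x := if psi x is Some v then v else i0.

Lemma base_phi v : base (phi v) = v.
Proof. by rewrite /base phiK. Qed.

Lemma new_edge_src g : g \in G -> base g.1 = i0 /\ (psi g.1 <> None -> g.1 = phi i0).
Proof.
move=> /new_edge_ends [[->|H] _]; first by rewrite base_phi.
by rewrite /base H.
Qed.

Lemma new_edge_tgt g v : g \in G -> psi g.2 = Some v -> v = j0 /\ g.2 = phi j0.
Proof.
move=> /new_edge_ends [_ [->|H]]; last by rewrite H.
by rewrite phiK => -[<-].
Qed.

(* A new path is contracted onto the edge k0 through its last edge, the only
   one entering an old node. *)
Definition proj_edge k :=
  if k < size EX then [:: k]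
  else if psi (nth (phi i0, phi i0) ext_order k).2 is Some _ then [:: k0] else [::].
Definition project p := flatten (map proj_edge p).

Lemma project_cons k p : project (k :: p) = proj_edge k ++ project p.
Proof. by []. Qed.

Lemma project_cat p q : project (p ++ q) = project p ++ project q.
Proof. by rewrite /project map_cat flatten_cat. Qed.

Lemma proj_edge_new k d : size EX <= k -> k < size ext_order ->
  proj_edge k = if psi (nth d ext_order k).2 is Some _ then [:: k0] else [::].
Proof.
by move=> H1 H2; rewrite /proj_edge ltnNge H1 /= (set_nth_default d _ H2).
Qed.

Lemma proj_edge_old k : k < size EX -> proj_edge k = [:: k].
Proof. by rewrite /proj_edge => ->. Qed.

Lemma dpath_project x y p : dpath ext_order x y p -> dpath EX (base x) (base y) (project p).
Proof.
elim: p x => [|k p IH] x /=; first by move/eqP => ->; rewrite eqxx.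
case/and3P => Hk /eqP Hs /IH {}IH.
rewrite project_cons.
case: (ltnP k (size EX)) => Hkm.
  move: Hs IH; rewrite proj_edge_old // nth_ext_order_old //= => <-; rewrite !base_phi => IH.
  by rewrite Hkm (set_nth_default (i0, i0) _ Hkm) eqxx.
have Hg := nth_ext_order_new (x, x) Hkm Hk.
have [Ha _] := new_edge_src Hg.
have Hax : base x = i0 by move: Ha; rewrite Hs.
rewrite (proj_edge_new (x, x) Hkm Hk) Hax.
case E2: (psi (nth (x, x) ext_order k).2) => [v|] /=.
  have [Hv _] := new_edge_tgt Hg E2.
  move: IH; rewrite /base E2 Hv => IH.
  by rewrite k0_lt nth_k0 eqxx.
by move: IH; rewrite /base E2.
Qed.

Lemma new_edge_src_cases x k : size EX <= k -> k < size ext_order ->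
  (nth (x, x) ext_order k).1 = x -> psi x = None \/ x = phi i0.
Proof.
move=> Hkm Hk Hs; have [_ H] := new_edge_src (nth_ext_order_new (x, x) Hkm Hk).
rewrite Hs in H; case E: (psi x) => [u|]; last by left.
by right; apply: H; rewrite E.
Qed.

Lemma project_nodes x y p v : dpath ext_order x y p ->
  v \in path_nodes EX (base x) (project p) ->
  phi v \in path_nodes ext_order x p \/ (v = i0 /\ psi x = None).
Proof.
elim: p x => [|k p IH] x /=.
  move=> _; rewrite inE => /eqP ->; rewrite /base.
  case E: (psi x) => [u|]; last by right.
  by left; rewrite (psiK E) inE.
case/and3P => Hk /eqP Hs Hp.
rewrite project_cons inE.
case: (ltnP k (size EX)) => Hkm.
  rewrite proj_edge_old //= inE.
  move: Hs Hp; rewrite nth_ext_order_old //= => Hs Hp.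
  have Hax : base x = (nth (i0, i0) EX k).1 by rewrite -Hs base_phi.
  case/orP => [/eqP ->|Hv]; first by left; rewrite Hax Hs eqxx.
  rewrite Hax (set_nth_default (i0, i0) _ Hkm) -(base_phi (nth (i0, i0) EX k).2) in Hv.
  case: (IH _ Hp Hv) => [->|[_]]; first by left; rewrite orbT.
  by rewrite phiK.
have Hg := nth_ext_order_new (x, x) Hkm Hk.
have [Ha _] := new_edge_src Hg.
have Hax : base x = i0 by move: Ha; rewrite Hs.
have Hxo := new_edge_src_cases Hkm Hk Hs.
rewrite (proj_edge_new (x, x) Hkm Hk) Hax.
case E2: (psi (nth (x, x) ext_order k).2) => [w|] /=.
  have [Hw _] := new_edge_tgt Hg E2.
  rewrite inE; case/orP => [/eqP ->|Hv].
    by case: Hxo => [->|->]; [right | left; rewrite eqxx].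
  rewrite nth_k0 /= -Hw in Hv.
  have Hz : base (nth (x, x) ext_order k).2 = w by rewrite /base E2.
  rewrite -Hz in Hv.
  by case: (IH _ Hp Hv) => [->|[_]]; [left; rewrite orbT | rewrite E2].
have Hz : base (nth (x, x) ext_order k).2 = i0 by rewrite /base E2.
move=> Hv; rewrite -Hz in Hv.
case: (IH _ Hp Hv) => [->|[-> _]]; first by left; rewrite orbT.
by case: Hxo => [->|->]; [right | left; rewrite eqxx].
Qed.

Lemma old_edge_src x k : k < size EX -> (nth (x, x) ext_order k).1 = x -> psi x <> None.
Proof. by move=> Hkm; rewrite nth_ext_order_old //= => <-; rewrite phiK. Qed.

Lemma mem_k0_project x y p : dpath ext_order x y p -> psi x = None -> psi y <> None ->
  k0 \in project p.
Proof.
elim: p x => [|k p IH] x /=; first by move/eqP => -> ->.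
case/and3P => Hk /eqP Hs Hp Hx Hy.
case: (ltnP k (size EX)) => Hkm; first by case: (old_edge_src Hkm Hs).
rewrite project_cons mem_cat (proj_edge_new (x, x) Hkm Hk).
case E2: (psi (nth (x, x) ext_order k).2) => [w|]; first by rewrite inE eqxx.
by rewrite (IH _ Hp E2 Hy) orbT.
Qed.

Lemma project_all_old x y p : dpath ext_order x y p -> psi y <> None -> k0 \notin project p ->
  all (fun k => k < size EX) p.
Proof.
elim: p x => [|k p IH] x //=.
case/and3P => Hk /eqP Hs Hp Hy.
rewrite project_cons mem_cat negb_or => /andP [H1 H2].
case: (ltnP k (size EX)) => Hkm /=; first exact: IH Hp Hy H2.
move: H1; rewrite (proj_edge_new (x, x) Hkm Hk).
case E2: (psi (nth (x, x) ext_order k).2) => [w|]; first by rewrite inE eqxx.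
by rewrite (mem_k0_project Hp E2 Hy) in H2.
Qed.

Lemma project_id p : all (fun k => k < size EX) p -> project p = p.
Proof.
elim: p => [|k p IH] //= /andP [Hk Hp].
by rewrite project_cons proj_edge_old // IH.
Qed.

Lemma project_rank x y p : dpath ext_order x y p -> psi x = None -> k0 \notin project p ->
  p = [::] \/ rank x < rank y.
Proof.
elim: p x => [|k p IH] x /=; first by left.
case/and3P => Hk /eqP Hs Hp Hx.
rewrite project_cons mem_cat negb_or => /andP [H1 H2]; right.
case: (ltnP k (size EX)) => Hkm; first by case: (old_edge_src Hkm Hs).
move: H1; rewrite (proj_edge_new (x, x) Hkm Hk).
case E2: (psi (nth (x, x) ext_order k).2) => [w|]; first by rewrite inE eqxx.
move=> _.
have Hg := nth_ext_order_new (x, x) Hkm Hk.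
have Hlt := rank_new_edge Hg (etrans (congr1 psi Hs) Hx) E2.
rewrite Hs in Hlt.
case: (IH _ Hp E2 H2) => [Hn|]; last exact: ltn_trans.
by move: Hp; rewrite Hn /= => /eqP <-.
Qed.

Lemma acyclic_ext_order : acyclic ext_order.
Proof.
move=> x p Hp.
have /EX_acyclic Hn := dpath_project Hp.
case E: (psi x) => [u|].
  have Ha : all (fun k => k < size EX) p.
    by apply: (project_all_old Hp); rewrite ?E // Hn.
  by rewrite -(project_id Ha).
case: (project_rank Hp E); by rewrite ?Hn ?ltnn.
Qed.

Lemma dpath_map_edges a b q : dpath EX a b q -> dpath ext_order (phi a) (phi b) q.
Proof.
elim: q a => [|k q IH] a /=; first by move/eqP => ->.
case/and3P => Hk /eqP Hs Hq.
rewrite ltn_size_ext_order // nth_ext_order_old //= -Hs.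
rewrite (set_nth_default (i0, i0) _ Hk) eqxx /=.
by rewrite -(set_nth_default _ (a, a) Hk); apply: IH.
Qed.

Lemma rooted_ext_order s : rooted EX s -> rooted ext_order (phi s).
Proof.
move=> Hs x.
case E: (psi x) => [u|].
  by have [ks Hks] := Hs u; exists ks; rewrite -(psiK E); apply: dpath_map_edges.
suff H : forall n x, rank x < n -> psi x = None -> exists ks, dpath ext_order (phi s) x ks.
  exact: (H (rank x).+1).
elim=> [|n IHn] {E}x // Hrx Ex.
have /mapP [g Hg1 Hg2] := fresh_reached Ex.
have Hidx : size EX + index g G < size ext_order.
  by rewrite size_ext_order ltn_add2l index_mem.
have Hnth : forall d, nth d ext_order (size EX + index g G) = g.
  by move=> d; rewrite nth_cat size_map ltnNge leq_addr /= addKn nth_index.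
have [ks Hks] : exists ks, dpath ext_order (phi s) g.1 ks.
  case E1: (psi g.1) => [u|].
    have [ks Hks] := Hs u; exists ks; rewrite -(psiK E1); exact: dpath_map_edges.
  have := rank_new_edge Hg1 E1; rewrite -Hg2 => /(_ Ex) H.
  apply: IHn E1.
  by apply: leq_trans H _.
exists (rcons ks (size EX + index g G)).
by apply: dpath_rcons; rewrite ?Hnth.
Qed.

Definition k0_ord : 'I_(size EX) := Ordinal k0_lt.
Definition proj_ord (k : 'I_(size ext_order)) : 'I_(size EX) := insubd k0_ord (val k).

Lemma proj_ordE k : val (proj_ord k) = if val k < size EX then val k else k0.
Proof. by rewrite /proj_ord val_insubd. Qed.

Lemma mem_project_proj_ord a b p (k : 'I_(size ext_order)) :
  dpath ext_order a b p -> psi b <> None ->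
  val k \in p -> val (proj_ord k) \in project p.
Proof.
move=> Hp Hb Hk; have [p1 [p2 [Ep Hks H1 H2]]] := dpath_split Hp Hk.
rewrite Ep project_cat project_cons !mem_cat proj_ordE.
case: (ltnP (val k) (size EX)) => Hkm.
  by rewrite proj_edge_old // inE eqxx orbT.
rewrite (proj_edge_new (a, a) Hkm Hks).
case E2: (psi (nth (a, a) ext_order k).2) => [w|]; first by rewrite inE eqxx orbT.
by rewrite (mem_k0_project H2 E2 Hb) !orbT.
Qed.

(* A new node has a single incoming edge, so two internally disjoint paths
   cannot both end there. *)
Lemma confluence_target_old a b p1 p2 : confluence ext_order a b p1 p2 -> psi b <> None.
Proof.
case=> H1 H2 Hne Hd Eb.
case/lastP: p1 H1 Hne Hd => [|p1 e1] H1 Hne Hd.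
  move: H1 => /= /eqP Eab; rewrite Eab in H2.
  by rewrite (acyclic_ext_order H2) eqxx in Hne.
case/lastP: p2 H2 Hne Hd => [|p2 e2] H2 Hne Hd.
  move: H2 => /= /eqP Eab; rewrite Eab in H1.
  by have := acyclic_ext_order H1; case: (p1).
move: H1; rewrite -cats1 dpath_cat /= => /andP [Q1 /and3P [He1 /eqP S1 /eqP T1]].
move: H2; rewrite -cats1 dpath_cat /= => /andP [Q2 /and3P [He2 /eqP S2 /eqP T2]].
set c1 := path_end ext_order a p1 in Q1 S1 T1.
set c2 := path_end ext_order a p2 in Q2 S2 T2.
have E12 : e1 = e2.
  apply: (@fresh_tgt_inj e1 e2 (c1, c1) (c2, c2) He1 He2); first by rewrite T1.
  by rewrite T1 T2.
subst e2.
have Ec : c1 = c2 by rewrite -S1 -S2 (set_nth_default (c2, c2) _ He1).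
have N1 : c1 \in path_nodes ext_order a (rcons p1 e1).
  by rewrite -cats1 mem_path_nodes_cat mem_path_end.
have N2 : c2 \in path_nodes ext_order a (rcons p2 e1).
  by rewrite -cats1 mem_path_nodes_cat mem_path_end.
rewrite -Ec in N2.
case: (Hd _ N1 N2) => Hc.
  rewrite Hc in Q1; rewrite -Ec Hc in Q2.
  by rewrite (acyclic_ext_order Q1) (acyclic_ext_order Q2) eqxx in Hne.
have : dpath ext_order c1 c1 [:: e1] by rewrite /= He1 S1 T1 Hc !eqxx.
by move/acyclic_ext_order.
Qed.

Lemma i0_neq_j0 : i0 != j0.
Proof.
apply/eqP => E.
have : dpath EX i0 i0 [:: k0] by rewrite /= k0_lt nth_k0 /= E !eqxx.
by move/EX_acyclic.
Qed.

Lemma confluence_project a b b' p1 p2 : confluence ext_order a b p1 p2 ->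
  psi b = Some b' -> project p1 != project p2 ->
  confluence EX (base a) b' (project p1) (project p2).
Proof.
case=> H1 H2 _ Hd Eb Hpq.
have Ab : base b = b' by rewrite /base Eb.
have Q1 := dpath_project H1; have Q2 := dpath_project H2; rewrite Ab in Q1 Q2.
split=> // v Hv1 Hv2.
case: (project_nodes H1 Hv1) => [Hi1|[-> Ea]]; last by left; rewrite /base Ea.
case: (project_nodes H2 Hv2) => [Hi2|[-> Ea]]; last by left; rewrite /base Ea.
case: (Hd _ Hi1 Hi2) => Hi; first by left; rewrite -Hi base_phi.
by right; apply: phi_inj; rewrite Hi (psiK Eb).
Qed.

(* Distinct paths with equal projections differ on new paths, which all run
   from i0 to j0; internal disjointness forces the target to be j0 and the
   edge to project onto k0. *)
Lemma confluence_same_project a b b' p1 p2 (k : 'I_(size ext_order)) :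
  confluence ext_order a b p1 p2 -> psi b = Some b' ->
  project p1 = project p2 -> val k \in p1 -> b' = j0 /\ val (proj_ord k) = k0.
Proof.
case=> H1 H2 Hne Hd Eb Hpq Hk.
have Hb : psi b <> None by rewrite Eb.
have Q1 := dpath_project H1.
have Ab : base b = b' by rewrite /base Eb.
rewrite Ab in Q1.
have Hk0 : k0 \in project p1.
  apply/negPn/negP => Hn.
  have A1 := project_all_old H1 Hb Hn.
  have A2 : all (fun k => k < size EX) p2 by apply: (project_all_old H2 Hb); rewrite -Hpq.
  by move: Hne; rewrite -(project_id A1) -(project_id A2) Hpq eqxx.
have [s1 [s2 [Es Hk0s S1 S2]]] := dpath_split Q1 Hk0.
have [N1 N2] := dpath_edge_nodes Q1 Hk0.
rewrite (set_nth_default (i0, i0) _ Hk0s) nth_k0 /= in S1 S2 N1 N2.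
have ij := i0_neq_j0.
have Hj1 : phi j0 \in path_nodes ext_order a p1.
  by case: (project_nodes H1 N2) => // [[E _]]; rewrite E eqxx in ij.
have Hj2 : phi j0 \in path_nodes ext_order a p2.
  by rewrite Hpq in N2; case: (project_nodes H2 N2) => // [[E _]]; rewrite E eqxx in ij.
have Hbj : b' = j0.
  case: (Hd _ Hj1 Hj2) => Hj; last by apply: phi_inj; rewrite Hj (psiK Eb).
  rewrite -Hj base_phi in S1.
  have : dpath EX j0 j0 (rcons s1 k0).
    by apply: dpath_rcons; rewrite // (set_nth_default (i0, i0) _ k0_lt) nth_k0.
  by move/EX_acyclic; case: (s1).
have Ha : base a = i0.
  case: (project_nodes H1 N1) => [Hi1|[_ Ea]]; last by rewrite /base Ea.
  have N1' := N1; rewrite Hpq in N1'.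
  case: (project_nodes H2 N1') => [Hi2|[_ Ea]]; last by rewrite /base Ea.
  case: (Hd _ Hi1 Hi2) => Hi; first by rewrite -Hi base_phi.
  by move: ij; rewrite Hbj in Eb; rewrite -(psiK Eb) in Hi; rewrite (phi_inj Hi) eqxx.
rewrite Ha in S1; rewrite Hbj in S2.
move: (mem_project_proj_ord H1 Hb Hk).
by rewrite Es (EX_acyclic S1) (EX_acyclic S2) inE => /eqP.
Qed.

Lemma label_set_ext_order (k : 'I_(size ext_order)) b : b \in label_set k ->
  exists b', b = phi b' /\
    ((b' = j0 /\ val (proj_ord k) = k0) \/ b' \in label_set (proj_ord k)).
Proof.
case/label_setP => a [p1 [p2 [Hc Hk]]].
have Hb := confluence_target_old Hc.
case Eb: (psi b) => [b'|] //; exists b'; split; first by rewrite (psiK Eb).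
case: (eqVneq (project p1) (project p2)) => Hpq.
  by left; apply: confluence_same_project Hc Eb Hpq Hk.
right; apply/label_setP; exists (base a), (project p1), (project p2).
have [H1 _ _ _] := Hc.
exact: conj (confluence_project Hc Eb Hpq) (mem_project_proj_ord H1 Hb Hk).
Qed.

Lemma src_k0_ord : src k0_ord = i0.
Proof. by rewrite (src_nth _ (i0, i0)) nth_k0. Qed.

Lemma label_j0_k0 (e : 'I_(size EX)) :
  src e = i0 -> j0 \in label_set e -> j0 \in label_set k0_ord.
Proof.
rewrite (src_nth _ (i0, i0)) => Hs /label_setP [a [p1 [p2 [Hc He]]]].
case: (boolP (k0 \in p1)) => H01; first by apply/label_setP; exists a, p1, p2.
case: (boolP (k0 \in p2)) => H02.
  by apply/label_setP; exists a, p2, p1; split=> //; apply: confluence_sym.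
have [H1 H2 Hne Hd] := Hc.
have [r1 [r2 [Ep Hes R1 R2]]] := dpath_split H1 He.
rewrite (set_nth_default (i0, i0) _ Hes) Hs in R1.
have P1 : dpath EX a j0 (rcons r1 k0).
  by apply: dpath_rcons; rewrite // (set_nth_default (i0, i0) _ k0_lt) nth_k0.
apply/label_setP; exists a, (rcons r1 k0), p2; split; last by rewrite mem_rcons inE eqxx.
split=> //.
  by apply/negP => /eqP E; move: H02; rewrite -E mem_rcons inE eqxx.
move=> v; rewrite -cats1 mem_path_nodes_cat (dpath_end R1) /= !inE.
rewrite nth_k0 /=.
case/or3P => [Hv|/eqP Hv|/eqP Hv] Hv2; last by right.
- by apply: Hd => //; rewrite Ep mem_path_nodes_cat Hv.
- by apply: Hd => //; rewrite Hv Ep mem_path_nodes_cat -{1}(dpath_end R1) mem_path_end.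
Qed.

Lemma src_proj_ord (k : 'I_(size ext_order)) u : psi (src k) = Some u -> src (proj_ord k) = u.
Proof.
rewrite !(src_nth _ (i0, i0)) (src_nth _ (phi i0, phi i0)) proj_ordE.
case: (ltnP (val k) (size EX)) => Hkm.
  by rewrite nth_ext_order_old //= phiK => -[].
have [_ H] := new_edge_src (nth_ext_order_new (phi i0, phi i0) Hkm (ltn_ord k)).
move=> E; rewrite nth_k0 /=.
have H' : (nth (phi i0, phi i0) ext_order k).1 = phi i0 by apply: H; rewrite E.
by rewrite H' phiK in E; case: E.
Qed.

Lemma bag_rel_proj_ord (k k' : 'I_(size ext_order)) :
  bag_rel k k' -> connect (@bag_rel _ EX) (proj_ord k) (proj_ord k').
Proof.
case/andP => /eqP Hs /set0Pn [c /setIP [Hc Hc']].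
case Ex: (psi (src k)) => [u|]; last first.
  have Ekk : k = k'.
    apply: val_inj; apply: (@fresh_src_inj k k' (phi i0, phi i0) (phi i0, phi i0)) => //.
      by rewrite -(src_nth _ (phi i0, phi i0)).
    by rewrite -!(src_nth _ (phi i0, phi i0)).
  by rewrite Ekk connect0.
have S1 := src_proj_ord Ex.
have S2 : src (proj_ord k') = u by apply: src_proj_ord; rewrite -Hs.
have Skk : src (proj_ord k) = src (proj_ord k') by rewrite S1 S2.
have [b1 [E1 C1]] := label_set_ext_order Hc.
have [b2 [E2 C2]] := label_set_ext_order Hc'.
have Eb : b1 = b2 by apply: phi_inj; rewrite -E1 -E2.
subst b2.
have Hko : forall k1 : 'I_(size ext_order), val (proj_ord k1) = k0 -> proj_ord k1 = k0_ord.
  by move=> k1 H; apply: val_inj.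
case: C1 => [[Hb1 R1]|L1]; case: C2 => [[Hb2 R2]|L2].
- by rewrite (Hko _ R1) (Hko _ R2) connect0.
- have Hk := Hko _ R1.
  have Hsrc : src (proj_ord k') = i0 by rewrite -Skk Hk src_k0_ord.
  have Lk' : j0 \in label_set (proj_ord k') by rewrite -Hb1.
  rewrite Hk; apply/connect1/(bag_rel_common_label _ (label_j0_k0 Hsrc Lk') Lk').
  by rewrite src_k0_ord Hsrc.
- have Hk := Hko _ R2.
  have Hsrc : src (proj_ord k) = i0 by rewrite Skk Hk src_k0_ord.
  have Lk : j0 \in label_set (proj_ord k) by rewrite -Hb2.
  rewrite Hk; apply/connect1/(bag_rel_common_label _ Lk (label_j0_k0 Hsrc Lk)).
  by rewrite src_k0_ord Hsrc.
- by apply: connect1; apply: (@bag_rel_common_label _ _ _ _ b1).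
Qed.

Lemma bag_label_set_ext_order (k : 'I_(size ext_order)) :
  bag_label_set k \subset phi j0 |: (phi @: bag_label_set (proj_ord k)).
Proof.
apply/subsetP => c /bigcupP [k' Hk' Hc].
have Hcon : connect (@bag_rel _ EX) (proj_ord k) (proj_ord k').
  by apply: (homo_connect bag_rel_proj_ord); move: Hk'; rewrite inE.
have [b [-> C]] := label_set_ext_order Hc.
rewrite !inE; case: C => [[-> _]|L]; first by rewrite eqxx.
apply/orP; right; apply: imset_f.
by apply/bigcupP; exists (proj_ord k'); rewrite // inE.
Qed.

Lemma ewX_ext_order : ewX ext_order <= (ewX EX).+1.
Proof.
have Hb (k : 'I_(size ext_order)) :
    #|bag_label_set k| <= (\max_(k1 < size EX) #|bag_label_set k1|) + 1.
  apply: leq_trans (subset_leq_card (bag_label_set_ext_order k)) _.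
  rewrite cardsU1 addnC; apply: leq_add; last by case: (_ \notin _).
  apply: leq_trans (leq_imset_card _ _) _.
  exact: leq_bigmax.
rewrite /ewX -[X in _ <= X]addn1 -addnA leq_add2l.
by apply/bigmax_leqP => k _; exact: Hb.
Qed.

Lemma ext_order_ew_le (E' : seq (V' * V')) s w :
  flips E' ext_order -> rooted EX s -> ewX EX <= w -> ew_le E' w.+1.
Proof.
move=> Hf Hs Hw; exists ext_order, (phi s); split.
  by split; [|exact: acyclic_ext_order|exact: rooted_ext_order].
by apply: leq_trans ewX_ext_order _; rewrite ltnS.
Qed.

End Extension.

Lemma map_edges_id (V : Type) (s : seq (V * V)) : map_edges id s = s.
Proof. by elim: s => [|[a b] s IH] //=; rewrite IH. Qed.

Lemma flips_map_edges (V V' : finType) (f : V -> V') (E X : seq (V * V)) :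
  flips E X -> flips (map_edges f E) (map_edges f X).
Proof.
elim: E X => [|e E IH] [|g X] //= /andP [H /IH ->]; rewrite andbT.
by case: e g H => [x y] [x' y'] /orP [] /eqP [-> ->]; rewrite eqxx ?orbT.
Qed.

Lemma ew_le_add_max_degree (V V' : finType) (E : seq (V * V)) (E' : seq (V' * V'))
    i j w :
  (i, j) \in E -> ew_le E' w.+1 -> ew_le E' (w + max_degree E).
Proof.
move=> Hij [X [s [HX Hw]]]; exists X, s; split=> //.
by apply: leq_trans Hw _; rewrite -addn1 leq_add2l; apply: max_degree_gt0 Hij.
Qed.

Lemma ew_le_parallel (V : finType) (E : seq (V * V)) (i j : V) (orient : seq bool) w :
  (i, j) \in E -> ew_le E w ->
  ew_le (E ++ [seq if b then (i, j) else (j, i) | b <- orient]) (w + max_degree E).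
Proof.
move=> Hij [EX [s [[Hf Hac Hro] Hw]]].
have [k0 [i0 [j0 [k0_lt nth_k0 Hor]]]] := flips_mem Hij Hf.
apply: ew_le_add_max_degree Hij _.
apply: (@ext_order_ew_le V V id Some _ _ EX [seq (i0, j0) | _ <- orient] k0 i0 j0
  (fun _ => 0) k0_lt nth_k0 Hac) => //.
- by move=> x v [->].
- by move=> g /mapP [? _ ->]; split; left.
rewrite /ext_order map_edges_id; apply: flips_cat Hf _.
elim: orient => [|b o IH] //=; rewrite IH andbT.
by case: b; case: Hor => -[-> ->]; rewrite eqxx ?orbT.
Qed.

Definition inl_inv (V W : Type) (x : V + W) : option V :=
  if x is inl v then Some v else None.

Lemma count_mem_map_inr (V W : eqType) (a : W) (ws : seq W) :
  count_mem (inr a : V + W) (map inr ws) = count_mem a ws.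
Proof. by elim: ws => [|w ws IH] //=; rewrite IH. Qed.

Lemma map_fst_swap (T : finType) (s : seq (T * T)) :
  map fst (map (@swap_edge _) s) = map snd s.
Proof. by elim: s => [|e s IH] //=; rewrite IH. Qed.

Lemma map_snd_swap (T : finType) (s : seq (T * T)) :
  map snd (map (@swap_edge _) s) = map fst s.
Proof. by elim: s => [|e s IH] //=; rewrite IH. Qed.

Lemma index_consecutive (T : eqType) (s1 s2 : seq T) a c :
  uniq (s1 ++ a :: c :: s2) ->
  index c (s1 ++ a :: c :: s2) = (index a (s1 ++ a :: c :: s2)).+1.
Proof.
rewrite cat_uniq => /and3P [_ Hd /= /andP [Ha _]].
have Ha1 : a \notin s1 by apply/negP => H; move/hasP: Hd; apply; exists a; rewrite ?inE ?eqxx.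
have Hc1 : c \notin s1.
  by apply/negP => H; move/hasP: Hd; apply; exists c; rewrite ?inE ?eqxx ?orbT.
have Hac : a != c by apply/eqP => E; move: Ha; rewrite E inE eqxx.
by rewrite !index_cat (negbTE Ha1) (negbTE Hc1) /= eqxx (negbTE Hac) eqxx addn1 addn0.
Qed.

Section NewPaths.
Variables (V W : finType) (i j : V).

Fixpoint chain_edges (x : V + W) (ws : seq W) : seq ((V + W) * (V + W)) :=
  if ws is w :: ws' then (x, inr w) :: chain_edges (inr w) ws' else [:: (x, inl j)].

Lemma path_edges_chain ws : path_edges i j ws = chain_edges (inl i) ws.
Proof.
rewrite /path_edges /=; move: (inl i : V + W) => x.
by elim: ws x => [|w ws IH] x //=; rewrite IH.
Qed.

Lemma map_fst_chain_edges x ws : map fst (chain_edges x ws) = x :: map inr ws.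
Proof. by elim: ws x => [|w ws IH] x //=; rewrite IH. Qed.

Lemma map_snd_chain_edges x ws : map snd (chain_edges x ws) = rcons (map inr ws) (inl j).
Proof. by elim: ws x => [|w ws IH] x //=; rewrite IH. Qed.

Lemma chain_edges_inr x ws a c : (inr a, inr c) \in chain_edges x ws ->
  exists s1 s2, (if x is inr x0 then x0 :: ws else ws) = s1 ++ a :: c :: s2.
Proof.
elim: ws x => [|w ws IH] x /=; first by rewrite inE => /eqP [].
rewrite inE => /orP [/eqP [<- <-]|/IH [s1 [s2 E]]]; first by exists [::], ws.
by case: x => [v|x0]; [exists s1, s2 | exists (x0 :: s1), s2; rewrite E].
Qed.

Lemma chain_edges_inl ws g : g \in chain_edges (inl i) ws ->
  (forall v, g.1 = inl v -> v = i) /\ (forall v, g.2 = inl v -> v = j).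
Proof.
move=> Hg; split=> v E.
  have := map_f fst Hg; rewrite map_fst_chain_edges E inE.
  by case/orP => [/eqP [] | /mapP [w _]].
have := map_f snd Hg; rewrite map_snd_chain_edges E mem_rcons inE.
by case/orP => [/eqP [] | /mapP [w _]].
Qed.

Definition oriented_path (b : bool) (ws : seq W) : seq ((V + W) * (V + W)) :=
  if b then path_edges i j ws else map (@swap_edge _) (path_edges i j ws).

Variable b : bool.

Lemma count_inr_oriented_path ws a :
  count_mem (inr a) (map fst (oriented_path b ws)) = count_mem a ws /\
  count_mem (inr a) (map snd (oriented_path b ws)) = count_mem a ws.
Proof.
rewrite /oriented_path path_edges_chain; case: b; rewrite ?map_fst_swap ?map_snd_swap;
  by rewrite map_fst_chain_edges map_snd_chain_edges /= -cats1 count_cat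
    count_mem_map_inr /= !addn0.
Qed.

Lemma oriented_path_inl ws g : g \in oriented_path b ws ->
  (forall v, g.1 = inl v -> v = (if b then i else j)) /\
  (forall v, g.2 = inl v -> v = (if b then j else i)).
Proof.
rewrite /oriented_path path_edges_chain; case: b; first exact: chain_edges_inl.
by case/mapP => g0 /chain_edges_inl [H1 H2] ->.
Qed.

Lemma oriented_path_inr ws a c : (inr a, inr c) \in oriented_path b ws ->
  exists s1 s2, ws = s1 ++ (if b then a else c) :: (if b then c else a) :: s2.
Proof.
rewrite /oriented_path path_edges_chain; case: b; first exact: chain_edges_inr.
case/mapP => [[x y]] H /= [Ex Ey].
by apply: (@chain_edges_inr (inl i)); rewrite Ex Ey.
Qed.

Lemma oriented_path_reaches ws a : a \in ws -> inr a \in map snd (oriented_path b ws).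
Proof.
move=> Ha; rewrite /oriented_path path_edges_chain; case: b.
  by rewrite map_snd_chain_edges mem_rcons inE map_f ?orbT.
by rewrite map_snd_swap map_fst_chain_edges inE map_f ?orbT.
Qed.

Lemma flips_oriented_path ws q :
  flips (path_edges i j ws) q -> flips q (oriented_path b ws).
Proof. by move/flips_sym=> H; rewrite /oriented_path; case: b => //; apply: flips_swap. Qed.

End NewPaths.

Lemma flatten_map_split (T U : eqType) (f : U -> seq T) (s : seq U) x :
  x \in s -> exists s1 s2, flatten (map f s) = s1 ++ f x ++ s2.
Proof.
case/splitPr => s1 s2; exists (flatten (map f s1)), (flatten (map f s2)).
by rewrite map_cat flatten_cat.
Qed.

Section PathFamily.
Variables (V W : finType) (i j : V) (b : bool).
Variable P : seq (seq W * seq ((V + W) * (V + W))).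
Let F := flatten [seq p.1 | p <- P].
Let G := flatten [seq oriented_path i j b p.1 | p <- P].

Lemma paths_edge_ends g : g \in G ->
  (g.1 = inl (if b then i else j) \/ inl_inv g.1 = None) /\
  (g.2 = inl (if b then j else i) \/ inl_inv g.2 = None).
Proof.
case/flatten_mapP => p _ /oriented_path_inl [H1 H2].
split; [case E1: g.1 => [v|a] | case E2: g.2 => [v|a]]; try by right.
  by left; rewrite (H1 _ E1).
by left; rewrite (H2 _ E2).
Qed.

(* position along the paths, read in the direction i0 -> j0 *)
Definition path_rank (x : V + W) : nat :=
  if x is inr a then (if b then index a F else size F - index a F) else 0.

Lemma path_rank_lt g : uniq F -> g \in G ->
  inl_inv g.1 = None -> inl_inv g.2 = None -> path_rank g.1 < path_rank g.2.
Proof.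
case: g => [[v|a] [v'|c]] // Hu /flatten_mapP [p Hp /oriented_path_inr [s1 [s2 Es]]] _ _ /=.
have [F1 [F2 EF]] := flatten_map_split (fun p : seq W * _ => p.1) Hp.
rewrite -/F Es -catA /= catA in EF.
have := index_consecutive (etrans (congr1 uniq (esym EF)) Hu).
have Hm : index (if b then c else a) F < size F.
  by rewrite index_mem EF mem_cat !inE eqxx !orbT.
rewrite -EF; move: Hm; case: (b) => /= Hm Hi; rewrite Hi ?ltnSn //.
by rewrite Hi in Hm; rewrite subnS ltn_predL subn_gt0 ltnW.
Qed.

Lemma count_inr_paths a :
  count_mem (inr a) (map fst G) = count_mem a F /\
  count_mem (inr a) (map snd G) = count_mem a F.
Proof.
rewrite /G /F; elim: P => [|p Q [IH1 IH2]] //=.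
have [H1 H2] := count_inr_oriented_path i j b p.1 a.
by rewrite !map_cat !count_cat IH1 IH2 H1 H2.
Qed.

Lemma paths_reach a : a \in F -> inr a \in map snd G.
Proof.
case/flatten_mapP => p Hp Ha; apply/mapP.
have /mapP [g Hg ->] := oriented_path_reaches i j b Ha.
by exists g => //; apply/flatten_mapP; exists p.
Qed.

Lemma flips_paths : (forall p, p \in P -> flips (path_edges i j p.1) p.2) ->
  flips (flatten [seq p.2 | p <- P]) G.
Proof.
rewrite /G; elim: P => [|p Q IH] //= Hfl.
apply: flips_cat; first by apply: flips_oriented_path; apply: Hfl; rewrite inE eqxx.
by apply: IH => q Hq; apply: Hfl; rewrite inE Hq orbT.
Qed.

End PathFamily.

Lemma count_inr_map_edges_inl (V W : finType) (X : seq (V * V)) (a : W) :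
  count_mem (inr a) (map fst (map_edges inl X)) = 0 /\
  count_mem (inr a) (map snd (map_edges inl X)) = 0.
Proof. by elim: X. Qed.

Lemma ew_le_paths (V W : finType) (E : seq (V * V)) (i j : V)
    (P : seq (seq W * seq ((V + W) * (V + W)))) (w : nat) :
  (i, j) \in E -> uniq (flatten [seq p.1 | p <- P]) ->
  (forall x : W, x \in flatten [seq p.1 | p <- P]) ->
  (forall p, p \in P -> flips (path_edges i j p.1) p.2) -> ew_le E w ->
  ew_le (lift_edges W E ++ flatten [seq p.2 | p <- P]) (w + max_degree E).
Proof.
move=> Hij Hu Hall Hfl [EX [s [[Hf Hac Hro] Hw]]].
have [k0 [i0 [j0 [k0_lt nth_k0 Hor]]]] := flips_mem Hij Hf.
set b := (i0, j0) == (i, j).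
have [Hi0 Hj0] : i0 = (if b then i else j) /\ j0 = (if b then j else i).
  by rewrite /b; case: eqP => [[-> ->] // | Hn]; case: Hor => [//|[-> ->]].
set G := flatten [seq oriented_path i j b p.1 | p <- P].
have fresh_degree a : count_mem (inr a) (map fst (ext_order inl EX G)) <= 1 /\
                      count_mem (inr a) (map snd (ext_order inl EX G)) <= 1.
  have [H1 H2] := count_inr_map_edges_inl EX a.
  have [H3 H4] := count_inr_paths i j b P a.
  rewrite /ext_order !map_cat !count_cat H1 H2 H3 H4.
  by split; rewrite count_uniq_mem //; case: (_ \in _).
apply: ew_le_add_max_degree Hij _.
apply: (@ext_order_ew_le V (V + W)%type inl (@inl_inv V W) _ _ EX G k0 i0 j0
  (path_rank b P) k0_lt nth_k0 Hac) => //.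
- by case=> [u|a] v //= [->].
- by rewrite Hi0 Hj0; apply: paths_edge_ends.
- by move=> g; apply: path_rank_lt.
- by case=> [v|a] // _; case: (fresh_degree a).
- by case=> [v|a] // _; case: (fresh_degree a).
- by case=> [v|a] // _; apply: paths_reach.
- by apply: flips_cat; [apply: flips_map_edges | apply: flips_paths].
Qed.

Theorem lemma34 (V : finType) (E : seq (V * V)) (i j : V) :
  (i, j) \in E ->
  (* (1) adding any number of new edges parallel to (i,j), each oriented
         as (i,j) or as (j,i) *)
  (forall (orient : seq bool) (w : nat),
     ew_le E w ->
     ew_le (E ++ [seq if b then (i, j) else (j, i) | b <- orient])
           (w + max_degree E)) /\
  (* (2) adding any number of paths between i and j through new nodes
         (each path has >= 1 new internal node, the paths' new node sets are
         pairwise disjoint, W consists exactly of the new nodes, and each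
         edge of a path is oriented arbitrarily) *)
  (forall (W : finType) (P : seq (seq W * seq ((V + W) * (V + W)))) (w : nat),
     (forall p, p \in P -> p.1 != [::]) ->
     uniq (flatten [seq p.1 | p <- P]) ->
     (forall x : W, x \in flatten [seq p.1 | p <- P]) ->
     (forall p, p \in P -> flips (path_edges i j p.1) p.2) ->
     ew_le E w ->
     ew_le (lift_edges W E ++ flatten [seq p.2 | p <- P])
           (w + max_degree E)).
Proof.
move=> Hij; split=> [orient w | W P w _]; first exact: ew_le_parallel.
exact: ew_le_paths.
Qed.
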